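(* Let $R$ be a finite group of squarefree order. If $R$ is abelian of composite order, or $R\cong \mathrm{D}_{2r}\times\mathrm{C}_q$ with $r\in\{3,5\}$ and $q$ a prime, then $R$ is not DRR-detecting.
   Context: $\mathrm{C}_n$ is the cyclic group of order $n$, $\mathrm{D}_{2n}$ the dihedral group of order $2n$. For a group $R$ and $S\subseteq R$, the Cayley digraph $\mathrm{Cay}(R,S)$ has vertex set $R$ and an arc from $r$ to $sr$ whenever $s\in S$. It is a DRR if $\mathrm{Aut}(\mathrm{Cay}(R,S))$ equals the right regular representation $\hat R$. $\mathrm{Aut}(R)_S$ is the group of automorphisms of $R$ fixing $S$ setwise. $R$ is DRR-detecting if for every $S\subseteq R$, $\mathrm{Aut}(R)_S=1$ implies $\mathrm{Cay}(R,S)$ is a DRR. *)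

From HB Require Import structures.
From mathcomp Require Import all_boot all_fingroup all_algebra all_solvable.
Set Implicit Arguments. Unset Strict Implicit. Unset Printing Implicit Defensive.

Local Open Scope group_scope.

Definition squarefree (n : nat) : Prop :=
  forall p : nat, prime p -> ~~ (p * p %| n)%N.

Section Cayley.
Variable gT : finGroupType.

(* Cay(R,S): vertex set R (= the whole type gT), arc from r to s*r for s in S,
   i.e. an arc x -> y iff y * x^-1 \in S. *)
Definition cay_arc (S : {set gT}) (x y : gT) : bool := y * x^-1 \in S.

Definition cay_aut (S : {set gT}) : {set {perm gT}} :=
  [set f : {perm gT} | [forall x, forall y, cay_arc S (f x) (f y) == cay_arc S x y]].

Definition right_regular : {set {perm gT}} :=
  [set f : {perm gT} | [exists g, [forall x, f x == x * g]]].

Definition is_DRR (S : {set gT}) : Prop := cay_aut S = right_regular.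

Definition Aut_stab (S : {set gT}) : {set {perm gT}} :=
  [set a in Aut [set: gT] | a @: S == S].

Definition DRR_detecting : Prop :=
  forall S : {set gT}, Aut_stab S = 1 -> is_DRR S.
End Cayley.

From HB Require Import structures.
From mathcomp Require Import all_boot all_fingroup all_algebra all_solvable.
Set Implicit Arguments. Unset Strict Implicit. Unset Printing Implicit Defensive.
Local Open Scope group_scope.

(* If h is central of prime order and S minus <[h]> is a union of cosets of
   <[h]>, then multiplying the elements of <[h]> by h and fixing all other
   elements is an automorphism of Cay(R, S) that is not a right translation.
   Take S = {h} u Y<[h]>, where h and Y generate R and the elements of Y have
   pairwise distinct orders coprime to #[h]: then h and each y in Y are the
   only elements of S of their order, so an automorphism of R fixing S fixes
   a generating set pointwise and is trivial.  A cyclic group of order m p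
   (p prime, coprime to m > 1) has h = g ^+ m and Y = {g ^+ p}; a group of
   order 2 r q with a central element h of order q has Y = {a, b} with
   #[a] = r and #[b] = 2. *)

Section CycleShift.
Variables (gT : finGroupType) (h : gT).

Definition cycle_shift (x : gT) : gT := if x \in <[h]> then x * h else x.

Lemma cycle_shift_inj : injective cycle_shift.
Proof.
move=> x y; rewrite /cycle_shift.
case: ifP => xH; case: ifP => yH; [exact: mulIg | move=> e | move=> e | by []].
- by rewrite -e groupM ?cycle_id in yH.
- by rewrite e groupM ?cycle_id in xH.
Qed.

Definition cycle_shift_perm : {perm gT} := perm cycle_shift_inj.

Lemma cycle_shift_not_regular k :
  h != 1 -> k \notin <[h]> -> cycle_shift_perm \notin right_regular gT.
Proof.
move=> nth1 kNh; rewrite inE; apply/existsP => -[g /forallP shiftg].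
have := shiftg 1; rewrite permE /cycle_shift group1 !mul1g => /eqP gE.
have := shiftg k; rewrite permE /cycle_shift (negbTE kNh) -gE => /eqP.
by rewrite -{1}[k]mulg1 => /mulgI/esym/eqP; apply/negP.
Qed.

Variable S : {set gT}.
Hypothesis h_central : forall x, commute h x.
Hypothesis S_cosets :
  forall s t, s \notin <[h]> -> t \in <[h]> -> s \in S -> s * t \in S.

Lemma mem_mul_cycle s t :
  s \notin <[h]> -> t \in <[h]> -> (s * t \in S) = (s \in S).
Proof.
move=> sNh th; apply/idP/idP => [stS | ]; last exact: S_cosets.
rewrite -(mulgK t s); apply: S_cosets; rewrite ?groupV //.
by apply: contra sNh => sth; rewrite -(mulgK t s) groupM ?groupV.
Qed.

Lemma cycle_shift_cay_aut : cycle_shift_perm \in cay_aut S.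
Proof.
rewrite inE; apply/forallP => x; apply/forallP => y.
rewrite /cay_arc !permE /cycle_shift.
case: ifP => yh; case: ifP => xh //.
- by rewrite invMg mulgA mulgK.
- have yxNh : y * x^-1 \notin <[h]>.
    by apply: contra (negbT xh) => /groupVr; rewrite invMg invgK groupMr ?groupV.
  by rewrite -mulgA (h_central x^-1) mulgA mem_mul_cycle ?cycle_id.
- have yxNh : y * x^-1 \notin <[h]>.
    by apply: contra (negbT yh); rewrite groupMr ?groupV.
  by rewrite -(h_central x) invMg mulgA mem_mul_cycle ?groupV ?cycle_id.
Qed.

Lemma not_DRR_of_cycle_cosets k : h != 1 -> k \notin <[h]> -> ~ is_DRR S.
Proof.
move=> nth1 kNh DRR_S; move: cycle_shift_cay_aut; rewrite DRR_S.
exact/negP/(cycle_shift_not_regular nth1 kNh).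
Qed.

End CycleShift.

Lemma Aut_stab_eq1 (gT : finGroupType) (S X : {set gT}) :
  <<X>> = [set: gT] -> X \subset S ->
  {in X & S, forall x s, #[s] = #[x] -> s = x} -> Aut_stab S = 1.
Proof.
move=> genX sXS ord_uniq; apply/eqP; rewrite eqEsubset sub1set andbC; apply/andP; split.
  by rewrite inE group1 (eq_imset _ (@perm1 _)) imset_id eqxx.
apply/subsetP => a; rewrite inE => /andP[autA /eqP aS]; rewrite inE.
have fixX x : x \in X -> a x = x.
  move=> xX; apply: ord_uniq => //; first by rewrite -aS imset_f ?(subsetP sXS).
  by rewrite -(autmE autA) order_injm ?injm_autm ?inE.
have : a \in 'C(X | [Aut [set: gT]]).
  apply/setIP; split; first exact: autA.
  by rewrite inE; apply/subsetP => x xX; rewrite inE; apply/eqP/fixX.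
rewrite -(@astab_gen _ _ _ _ [Aut [set: gT]]%gact) ?subsetT // genX => /astab_act fixT.
apply/eqP/(eq_Aut autA (group1 _)) => x _.
by rewrite perm1 -{2}(fixT x) ?inE //= autactK.
Qed.

Section CentralPrime.
Variables (gT : finGroupType) (h : gT) (Y : {set gT}).
Hypotheses (h_prime : prime #[h]) (h_central : forall x, commute h x).
Hypotheses (Y_coprime : {in Y, forall y, coprime #[y] #[h]}) (Y_nt : 1 \notin Y).
Hypotheses (Y_order_inj : {in Y &, injective order}) (gen_hY : <<h |: Y>> = [set: gT]).

Let S := h |: Y * <[h]>.

Lemma order_cycle_prime t : t \in <[h]> -> #[t] = 1%N \/ #[t] = #[h].
Proof.
move/order_dvdG; case/primeP: h_prime => _ dvd_h /dvd_h.
by case/orP => /eqP; [left | right].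
Qed.

Lemma order_mul_cycle y t :
  y \in Y -> t \in <[h]> -> #[y * t] = (#[y] * #[t])%N.
Proof.
move=> yY /cycleP[i ->]; apply: orderM; first exact/commuteX/commute_sym.
exact: coprime_dvdr (order_dvdG (mem_cycle h i)) (Y_coprime yY).
Qed.

Lemma order_Y_ndvd y : y \in Y -> ~~ (#[y] %| #[h]).
Proof.
move=> yY; apply/negP => /gcdn_idPl yh; move: (Y_coprime yY).
by rewrite /coprime yh order_eq1 => /eqP y1; move: Y_nt; rewrite -y1 yY.
Qed.

Lemma order_h_ndvd y : y \in Y -> ~~ (#[h] %| #[y]).
Proof. by move=> yY; rewrite -prime_coprime // coprime_sym Y_coprime. Qed.

Lemma Y_notin_cycle y : y \in Y -> y \notin <[h]>.
Proof. by move=> yY; apply: contra (order_Y_ndvd yY); apply: order_dvdG. Qed.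

Lemma S_cosets s t : s \notin <[h]> -> t \in <[h]> -> s \in S -> s * t \in S.
Proof.
move=> sNh th; case/setU1P => [sh | /mulsgP[y u yY uh ->]].
  by rewrite sh cycle_id in sNh.
by rewrite -mulgA setU1r // mem_mulg ?groupM.
Qed.

Lemma S_order_unique : {in h |: Y & S, forall x s, #[s] = #[x] -> s = x}.
Proof.
move=> x s xhY; case/setU1P => [-> | /mulsgP[y t yY th ->]] ord_s.
  case/setU1P: xhY => [-> // | xY].
  by move: (order_h_ndvd xY); rewrite -ord_s dvdnn.
rewrite order_mul_cycle // in ord_s.
case/setU1P: xhY => [xh | xY].
  by move: (order_Y_ndvd yY); rewrite -xh -ord_s dvdn_mulr.
have [t1 | th'] := order_cycle_prime th.
  have -> : t = 1 by apply/eqP; rewrite -order_eq1 t1.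
  by rewrite mulg1; apply: Y_order_inj; rewrite // -ord_s t1 muln1.
by move: (order_h_ndvd xY); rewrite -ord_s th' dvdn_mull.
Qed.

Lemma not_DRR_detecting_central_prime : Y != set0 -> ~ DRR_detecting gT.
Proof.
case/set0Pn => k kY detect.
apply: (not_DRR_of_cycle_cosets h_central S_cosets (k := k)).
- by rewrite -order_eq1; apply: contraTneq h_prime => ->.
- exact: Y_notin_cycle.
apply/detect/(Aut_stab_eq1 gen_hY _ S_order_unique).
by apply/subsetP => x /setU1P[-> | xY]; rewrite !inE ?eqxx // -[x]mulg1 mem_mulg ?orbT.
Qed.

End CentralPrime.

Lemma gen_setT_of_dvd_card (gT : finGroupType) (X : {set gT}) :
  (#|gT| %| #|<<X>>|)%N -> <<X>> = [set: gT].
Proof.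
by move=> dvdX; apply/eqP; rewrite eqEcard subsetT cardsT dvdn_leq ?cardG_gt0.
Qed.

Lemma squarefree_pgroup_cyclic (gT : finGroupType) (G V : {group gT}) (p : nat) :
  squarefree #|G| -> p.-group V -> V \subset G -> cyclic V.
Proof.
move=> sqfG pV sVG; have [-> | ntV] := eqVneq V 1%G; first exact: cyclic1.
have [p_pr _ [[|m] cardV]] := pgroup_pdiv pV ntV.
  by apply: prime_cyclic; rewrite cardV expn1.
case/negP: (sqfG p p_pr); apply: dvdn_trans (cardSg sVG).
by rewrite cardV !expnS mulnA dvdn_mulr.
Qed.

Lemma squarefree_abelian_cyclic (gT : finGroupType) (G : {group gT}) :
  squarefree #|G| -> abelian G -> cyclic G.
Proof.
move=> sqfG abG; apply: nil_Zgroup_cyclic (abelian_nil abG).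
apply/forall_inP => V /SylowP[p _ /and3P[sVG pV _]].
exact: squarefree_pgroup_cyclic pV sVG.
Qed.

Lemma squarefree_composite_split n :
  squarefree n -> (1 < n)%N -> ~~ prime n ->
  exists2 p, prime p & exists2 m, n = (m * p)%N & (1 < m)%N /\ coprime p m.
Proof.
move=> sqf n_gt1 n_comp; set p := pdiv n.
have p_pr : prime p := pdiv_prime n_gt1.
have nE : n = (n %/ p * p)%N by rewrite divnK ?pdiv_dvd.
exists p => //; exists (n %/ p)%N => //; set m := (n %/ p)%N in nE *.
have m_neq1 : m != 1%N by apply: contraNneq n_comp => m1; rewrite nE m1 mul1n.
have m_gt0 : (0 < m)%N by rewrite lt0n; apply: contraTneq n_gt1 => m0; rewrite nE m0.
split; first by rewrite ltn_neqAle eq_sym m_neq1.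
rewrite prime_coprime //; move: (sqf _ p_pr); apply: contraNN => /dvdnP[j mE].
by rewrite nE mE -mulnA dvdn_mull.
Qed.

Lemma cyclic_not_DRR_detecting (gT : finGroupType) p m :
  cyclic [set: gT] -> prime p -> #|gT| = (m * p)%N -> (1 < m)%N -> coprime p m ->
  ~ DRR_detecting gT.
Proof.
move=> cycT p_pr cardT m_gt1 co_pm; have [g defT] := cyclicP cycT.
have ord_g : #[g] = (m * p)%N by rewrite -cardT -cardsT defT.
have ord_h : #[g ^+ m] = p by rewrite orderXdiv ord_g ?dvdn_mulr // mulKn // ltnW.
have ord_k : #[g ^+ p] = m by rewrite orderXdiv ord_g ?dvdn_mull // mulnK // prime_gt0.
apply: (@not_DRR_detecting_central_prime _ (g ^+ m) [set g ^+ p]).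
- by rewrite ord_h.
- by move=> x; apply: (centsP (cyclic_abelian cycT)); rewrite inE.
- by move=> y /set1P ->; rewrite ord_h ord_k coprime_sym.
- by rewrite inE eq_sym -order_eq1 ord_k gtn_eqF.
- by move=> y y' /set1P -> /set1P ->.
- apply: gen_setT_of_dvd_card; rewrite cardT Gauss_dvd 1?coprime_sym //.
  by rewrite -{1}ord_k -ord_h !order_dvdG // mem_gen // !inE eqxx ?orbT.
- by apply/set0Pn; exists (g ^+ p); rewrite set11.
Qed.

Lemma central_order_2pq_not_DRR_detecting (gT : finGroupType) (c : gT) p q :
  prime p -> prime q -> p != 2 -> q != 2 -> p != q ->
  #|gT| = (2 * p * q)%N -> #[c] = q -> (forall x, commute c x) ->
  ~ DRR_detecting gT.
Proof.
move=> p_pr q_pr p_neq2 q_neq2 p_neqq cardT ord_c c_central.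
have coprime_primes a b : prime a -> prime b -> a != b -> coprime a b.
  by move=> a_pr b_pr; rewrite prime_coprime // dvdn_prime2.
have [a _ ord_a] : {a | a \in [set: gT] & #[a] = p}.
  by apply: Cauchy; rewrite // cardsT cardT -mulnA dvdn_mull ?dvdn_mulr.
have [b _ ord_b] : {b | b \in [set: gT] & #[b] = 2}.
  by apply: Cauchy; rewrite // cardsT cardT -mulnA dvdn_mulr.
have co_2p_q : coprime (2 * p) q by rewrite coprimeMl !coprime_primes // eq_sym.
have co_2_p : coprime 2 p by rewrite coprime_primes // eq_sym.
apply: (@not_DRR_detecting_central_prime _ c [set a; b]).
- by rewrite ord_c.
- exact: c_central.
- by move=> y /set2P[] ->; rewrite ord_c ?ord_a ?ord_b coprime_primes // eq_sym.
- by rewrite !inE !(eq_sym 1) -!order_eq1 ord_a ord_b orbF gtn_eqF ?prime_gt1.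
- by move=> y y' /set2P[] -> /set2P[] -> //; rewrite ord_a ord_b => e;
    case/eqP: p_neq2; rewrite e.
- apply: gen_setT_of_dvd_card; rewrite cardT !Gauss_dvd //.
  by rewrite -ord_a -ord_b -ord_c !order_dvdG // mem_gen // !inE eqxx ?orbT.
- by apply/set0Pn; exists a; rewrite set21.
Qed.

Lemma card_dihedral_Zp r q :
  (1 < r)%N -> (1 < q)%N -> #|[set: ('D_(2 * r) * 'Z_q)%type]| = (2 * r * q)%N.
Proof.
move=> r_gt1 q_gt1; rewrite cardsT card_prod card_ord Zp_cast // mul2n.
by rewrite -cardsT card_dihedral.
Qed.

Lemma isog_prod_Zp_central (gT aT : finGroupType) q :
  (1 < q)%N -> [set: gT] \isog [set: (aT * 'Z_q)%type] ->
  exists2 c : gT, #[c] = q & forall x, commute c x.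
Proof.
move=> q_gt1; rewrite isog_sym => /isogP[f injf imf].
have Zp1_central (y : aT * 'Z_q) : commute (pair1g aT (Zp1 : 'Z_q)) y.
  case: y => d w; change ((1 * d, (Zp1 : 'Z_q) * w) = (d * 1, w * Zp1)).
  by rewrite mul1g mulg1 [w * _]Zp_addC.
exists (f (pair1g aT (Zp1 : 'Z_q))).
  by rewrite order_injm ?inE // order_injm ?injm_pair1g ?inE // order_Zp1 Zp_cast.
move=> x; have /morphimP[y _ _ ->] : x \in f @* [set: aT * 'Z_q] by rewrite imf inE.
by rewrite /commute -!morphM ?inE // Zp1_central.
Qed.

Theorem corollary4p6 (gT : finGroupType) :
  squarefree #|gT| ->
  ((abelian [set: gT] /\ 1 < #|gT| /\ ~~ prime #|gT|)%N \/
   (exists r q : nat, r \in [:: 3; 5]%N /\ prime q /\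
      [set: gT] \isog [set: ('D_(2 * r) * 'Z_q)%type])) ->
  ~ DRR_detecting gT.
Proof.
move=> sqf [[abT [gt1 not_prime]] | [r [q [r35 [q_pr isoT]]]]].
  have cycT : cyclic [set: gT] by apply: squarefree_abelian_cyclic; rewrite ?cardsT.
  have [p p_pr [m cardT [m_gt1 co_pm]]] := squarefree_composite_split sqf gt1 not_prime.
  exact: cyclic_not_DRR_detecting cycT p_pr cardT m_gt1 co_pm.
have [r_pr r_neq2] : prime r /\ r != 2 by move: r35; rewrite !inE => /orP[] /eqP ->.
have cardT : #|gT| = (2 * r * q)%N.
  by rewrite -cardsT (card_isog isoT) card_dihedral_Zp ?prime_gt1.
have [c ord_c c_central] := isog_prod_Zp_central (prime_gt1 q_pr) isoT.
have q_neq2 : q != 2.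
  by apply: contraNneq (sqf 2 isT) => q2; rewrite cardT q2 mulnC dvdn_mul ?dvdn_mulr.
have r_neqq : r != q.
  by apply: contraNneq (sqf r r_pr) => rq; rewrite cardT -rq mulnC dvdn_mul ?dvdn_mull.
exact: central_order_2pq_not_DRR_detecting r_pr q_pr r_neq2 q_neq2 r_neqq cardT ord_c c_central.
Qed.
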